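(* Let $V=\mathbb{R}^{d\times k}$ and let $\mathfrak{S}_d$ act on $V$ by permuting the rows of a matrix ($X\mapsto PX$ for permutation matrices $P$). If $d\ge m$, then $$\dim\big(\mathbb{R}[V]_m^{\mathfrak{S}_d}\big)=\sum_{j=0}^m\sum_{\alpha\vdash j}\prod_{i=1}^j\binom{\binom{i+k-1}{i}+\mu_i(\alpha)-1}{\mu_i(\alpha)},$$ which is independent of $d$.
   Context: $\mathbb{R}[V]_m$ denotes the real polynomials on $V$ of total degree at most $m$, and $\mathbb{R}[V]_m^{G}$ the subspace of $G$-invariant ones. A partition $\alpha\vdash j$ of $j$ is a non-increasing sequence of positive integers summing to $j$ (the empty partition for $j=0$); $\mu_i(\alpha)$ denotes the number of parts of $\alpha$ equal to $i$. *)

From HB Require Import structures.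
From mathcomp Require Import all_boot all_order all_algebra all_fingroup.
From mathcomp Require Import reals.
From mathcomp Require Import mpoly.
Set Implicit Arguments. Unset Strict Implicit. Unset Printing Implicit Defensive.
Import Order.TTheory GRing.Theory Num.Theory.
Local Open Scope ring_scope.

Definition has_dim (R : pzRingType) (V : lmodType R) (S : V -> Prop) (N : nat) : Prop :=
  exists B : 'I_N -> V,
    [/\ forall i, S (B i),
        forall c : 'I_N -> R, \sum_(i < N) c i *: B i = 0 -> forall i, c i = 0
      & forall v, S v -> exists c : 'I_N -> R, v = \sum_(i < N) c i *: B i].

(* Polynomial functions on V = R^(d x k): polynomials in the d*k entries,
   a matrix X being evaluated through its vectorisation mxvec X. *)
Definition evalM (R : realType) (d k : nat) (p : {mpoly R[d * k]})
  (X : 'M[R]_(d, k)) : R := p.@[fun i => mxvec X 0 i].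

(* R[V]_m^{S_d}: polynomials of total degree at most m invariant under
   X |-> P X for every permutation matrix P. *)
Definition inv_poly_le (R : realType) (d k m : nat) : {mpoly R[d * k]} -> Prop :=
  fun p => (msize p <= m.+1)%N /\
    forall (s : 'S_d) (X : 'M[R]_(d, k)),
         evalM p (perm_mx s *m X) = evalM p X.

Definition is_partition (j : nat) (a : seq nat) : bool :=
  [&& sorted geq a, all (fun x => 0 < x)%N a & sumn a == j].

Fixpoint seqs_len (n b : nat) : seq (seq nat) :=
  match n with
  | 0 => [:: [::]]
  | n'.+1 => [seq x :: s | x <- iota 0 b, s <- seqs_len n' b]
  end.

Definition partitions (j : nat) : seq (seq nat) :=
  undup [seq a <- flatten [seq seqs_len l j.+1 | l <- iota 0 j.+1]
        | is_partition j a].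

Definition mult (i : nat) (a : seq nat) : nat := count_mem i a.

From HB Require Import structures.
From mathcomp Require Import all_boot all_order all_algebra all_fingroup.
From mathcomp Require Import reals.
From mathcomp Require Import mpoly.
Set Implicit Arguments. Unset Strict Implicit. Unset Printing Implicit Defensive.

(* The monomials in the d*k matrix entries are the exponent matrices, and S_d acts on
   them by permuting rows, i.e. through a permutation of the variables. Since R is
   infinite, invariance of the polynomial function is invariance of the polynomial under
   these variable permutations, so the invariant polynomials of degree at most m have the
   orbit sums of the monomials of degree at most m as a basis. An orbit is a multiset of
   d rows of width k; when d >= m it is determined by, and can be realised from, its row
   type: the partition alpha of the nonzero row sums, together with, for every i, the
   multiplicities of the C(i+k-1, i) rows of sum i, a weak composition of mu_i(alpha)
   into C(i+k-1, i) parts. Counting row types gives the formula. *)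

Lemma sum_count_mem (T : eqType) (X s : seq T) : uniq X ->
  \sum_(x <- X) count_mem x s = count (mem X) s.
Proof.
move=> uniq_X; elim: s => [|y s IHs] /=; first by rewrite big1.
rewrite big_split /= IHs; congr (_ + _).
rewrite -(count_uniq_mem y uniq_X) -sumn_count sumnE big_map.
by apply: eq_bigr => x _; rewrite eq_sym.
Qed.

Lemma map_nth_index (T : eqType) (X : seq T) (c : seq nat) :
  uniq X -> size c = size X -> [seq nth 0 c (index x X) | x <- X] = c.
Proof.
move=> uniq_X size_c; apply: (@eq_from_nth _ 0); first by rewrite size_map size_c.
case: X uniq_X size_c => [|x0 X] uniq_X size_c i; rewrite size_map // => lt_iX.
by rewrite (nth_map x0) // index_uniq.
Qed.

Lemma leq_sumn (s : seq nat) x : x \in s -> x <= sumn s.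
Proof.
elim: s => //= y s IHs; rewrite inE => /orP[/eqP->|/IHs]; first exact: leq_addr.
by move/leq_trans; apply; apply: leq_addl.
Qed.

Lemma size_le_sumn (s : seq nat) : all (fun x => 0 < x) s -> size s <= sumn s.
Proof. by elim: s => //= x s IHs /andP[x_gt0 /IHs]; rewrite -add1n; apply: leq_add. Qed.

Lemma sumn_eq0_nseq (r : seq nat) : (sumn r == 0) = (r == nseq (size r) 0).
Proof. by elim: r => //= x r IHr; rewrite addn_eq0 IHr eqseq_cons. Qed.

Lemma sumn_filter_gt0 (s : seq nat) : sumn [seq x <- s | 0 < x] = sumn s.
Proof. by elim: s => //= -[|x] s IHs /=; rewrite IHs. Qed.

Lemma all2_map_same (S T U : Type) (r : T -> U -> bool) (f : S -> T) (g : S -> U) s :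
  all2 r (map f s) (map g s) = all (fun x => r (f x) (g x)) s.
Proof. by elim: s => //= x s ->. Qed.

Lemma all2_nth (S T : Type) (r : S -> T -> bool) s t x0 y0 : all2 r s t ->
  size s = size t /\ forall i, i < size s -> r (nth x0 s i) (nth y0 t i).
Proof.
elim: s t => [|x s IHs] [|y t] //= /andP[r_xy /IHs[-> r_st]].
by split => // -[|i] //=; rewrite ltnS; apply: r_st.
Qed.

Lemma geq_total : total geq.
Proof. by move=> x y; apply: leq_total. Qed.

Lemma geq_trans : transitive geq.
Proof. by move=> y x z /= le_yx le_zy; apply: leq_trans le_yx. Qed.

Lemma geq_anti : antisymmetric geq.
Proof. by move=> x y; rewrite andbC => /anti_leq. Qed.

Lemma size_flatten_nseq (T : Type) (X : seq T) (c : T -> nat) :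
  size (flatten [seq nseq (c x) x | x <- X]) = \sum_(x <- X) c x.
Proof.
rewrite size_flatten /shape -map_comp sumnE big_map.
by under eq_bigr do rewrite /= size_nseq.
Qed.

Lemma count_flatten_nseq (T : eqType) (X : seq T) (c : T -> nat) y : uniq X ->
  count_mem y (flatten [seq nseq (c x) x | x <- X]) = (y \in X) * c y.
Proof.
move=> uniq_X; rewrite count_flatten -map_comp sumnE big_map.
under eq_bigr do rewrite /= count_nseq.
rewrite -(count_uniq_mem y uniq_X) -sumn_count sumnE big_map big_distrl /=.
by apply: eq_bigr => x _; case: eqP => [->|]; rewrite ?mul1n ?mul0n.
Qed.

Fixpoint weak_compositions (N mu : nat) : seq (seq nat) :=
  if N is N'.+1 then
    [seq x :: s | x <- iota 0 mu.+1, s <- weak_compositions N' (mu - x)]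
  else if mu == 0 then [:: [::]] else [::].

Lemma weak_compositionsS N mu : weak_compositions N.+1 mu =
  [seq x :: s | x <- iota 0 mu.+1, s <- weak_compositions N (mu - x)].
Proof. by []. Qed.

Lemma mem_weak_compositions N mu s :
  (s \in weak_compositions N mu) = (size s == N) && (sumn s == mu).
Proof.
elim: N mu s => [|N IHN] mu s; first by case: mu; case: s.
rewrite weak_compositionsS; apply/idP/idP => [/allpairsPdep[x [s' [x_mu]]]|].
  rewrite IHN => /andP[/eqP <- /eqP sum_s'] ->.
  have le_x_mu : x <= mu by move: x_mu; rewrite mem_iota.
  by rewrite /= sum_s' subnKC ?eqxx.
case: s => [|x s] // /andP[/eqP [size_s] /eqP sum_s]; apply/allpairsPdep.
exists x, s; split => //; first by rewrite mem_iota /= ltnS -sum_s leq_addr.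
by rewrite (IHN (mu - x) s) size_s -sum_s /= addKn !eqxx.
Qed.

Lemma uniq_weak_compositions N mu : uniq (weak_compositions N mu).
Proof.
elim: N mu => [|N IHN] mu; first by case: mu.
rewrite weak_compositionsS; apply: allpairs_uniq_dep => //; first exact: iota_uniq.
by move=> [x s] [x' s'] _ _ /= [eq_x]; move: s'; rewrite -eq_x => s' /= ->.
Qed.

Lemma sum_binomial_diag N mu : \sum_(y < mu.+1) 'C(N + y - 1, y) = 'C(N + mu, mu).
Proof.
elim: mu => [|mu IHmu]; first by rewrite big_ord1 !bin0.
by rewrite big_ord_recr /= IHmu addnS subn1 /= binS addnC.
Qed.

Lemma size_weak_compositions N mu :
  size (weak_compositions N mu) = 'C(N + mu - 1, mu).
Proof.
elim: N mu => [|N IHN] mu; first by case: mu => // mu; rewrite add0n subn1 bin_small.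
rewrite weak_compositionsS size_allpairs_dep sumnE big_map.
under eq_bigr do rewrite IHN.
rewrite -[iota 0 _]/(index_iota 0 mu.+1) big_nat_rev big_mkord.
rewrite (eq_bigr (fun y : 'I_mu.+1 => 'C(N + y - 1, y))); last first.
  by move=> y _; rewrite add0n subSS subKn // -ltnS.
by rewrite sum_binomial_diag addSn subn1.
Qed.

Fixpoint cartesian (T : Type) (Ls : seq (seq T)) : seq (seq T) :=
  if Ls is L :: Ls' then [seq x :: s | x <- L, s <- cartesian Ls'] else [:: [::]].

Lemma size_cartesian (T : Type) (Ls : seq (seq T)) :
  size (cartesian Ls) = \prod_(L <- Ls) size L.
Proof. by elim: Ls => [|L Ls IHLs]; rewrite ?big_nil // big_cons size_allpairs IHLs. Qed.

Lemma mem_cartesian (T : eqType) (Ls : seq (seq T)) s :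
  (s \in cartesian Ls) = all2 (fun x L => x \in L) s Ls.
Proof.
elim: Ls s => [|L Ls IHLs] s; first by case: s.
apply/idP/idP => [/allpairsP[[x s'] /= [x_L s'_Ls ->]]|]; first by rewrite /= x_L -IHLs.
by case: s => [|x s] //= /andP[x_L s_Ls]; apply/allpairsP; exists (x, s); rewrite IHLs.
Qed.

Lemma uniq_cartesian (T : eqType) (Ls : seq (seq T)) :
  all uniq Ls -> uniq (cartesian Ls).
Proof.
elim: Ls => [|L Ls IHLs] //= /andP[uniq_L /IHLs uniq_Ls].
by apply: allpairs_uniq => // -[x s] [x' s'] _ _ /= [-> ->].
Qed.

Lemma mem_seqs_len n b s :
  (s \in seqs_len n b) = (size s == n) && all (fun x => x < b) s.
Proof.
elim: n s => [|n IHn] s; first by case: s.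
apply/idP/idP => [/allpairsPdep[x [s' [x_b]]]|].
  rewrite (IHn s') => /andP[size_s' all_s'] ->.
  by move: x_b; rewrite /= all_s' eqSS size_s' mem_iota andbT.
case: s => [|x s] // /andP[size_s /andP[x_b all_s]]; apply/allpairsPdep.
exists x, s; split => //; first by rewrite mem_iota.
by rewrite (IHn s) -eqSS size_s.
Qed.

Lemma mem_partitions j a : (a \in partitions j) = is_partition j a.
Proof.
rewrite /partitions mem_undup mem_filter andb_idr // => /and3P[_ pos_a /eqP sum_a].
apply/flatten_mapP; exists (size a); first by rewrite mem_iota ltnS -sum_a size_le_sumn.
by rewrite mem_seqs_len eqxx; apply/allP => x x_a; rewrite ltnS -sum_a leq_sumn.
Qed.

Lemma eq_partition_mult a b : all (fun x => 0 < x) a -> all (fun x => 0 < x) b ->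
  sorted geq a -> sorted geq b -> (forall i, 0 < i -> mult i a = mult i b) -> a = b.
Proof.
move=> pos_a pos_b sorted_a sorted_b eq_mult.
apply: (sorted_eq geq_trans geq_anti) => //; apply/allP => x _; apply/eqP.
case: (posnP x) => [->|/eq_mult//].
have count0 s : all (fun x => 0 < x) s -> count_mem 0 s = 0.
  by move=> /allP pos_s; apply/count_memPn/negP => /pos_s.
by rewrite !count0.
Qed.

Definition partitions_le m := [seq a | j <- iota 0 m.+1, a <- partitions j].

Lemma mem_partitions_le m a :
  (a \in partitions_le m) = (sumn a <= m) && is_partition (sumn a) a.
Proof.
apply/idP/idP => [/allpairsPdep[j [a' [j_m a'_j ->]]]|/andP[a_m a_part]].
  move: a'_j; rewrite mem_partitions => a_part; have /and3P[_ _ /eqP->] := a_part.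
  by move: j_m; rewrite mem_iota ltnS a_part andbT => /andP[].
rewrite /partitions_le; apply/allpairsPdep.
by exists (sumn a), a; rewrite mem_iota ltnS mem_partitions.
Qed.

Lemma uniq_partitions_le m : uniq (partitions_le m).
Proof.
apply: allpairs_uniq_dep => [|j _|]; rewrite ?iota_uniq ?undup_uniq //.
move=> _ _ /flatten_mapP[j _ /mapP[a + ->]] /flatten_mapP[j' _ /mapP[a' + ->]] /=.
by rewrite !mem_partitions => /and3P[_ _ /eqP<-] /and3P[_ _ /eqP<-] ->.
Qed.

Section RowTypes.
Variable k : nat.
Implicit Types (Rs : seq (seq nat)) (a : seq nat).

Definition has_width Rs := all (fun r => size r == k) Rs.

Lemma count_sumn_eq Rs i : has_width Rs ->
  count (fun r => sumn r == i) Rs = \sum_(y <- weak_compositions k i) count_mem y Rs.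
Proof.
move=> /allP width_Rs; rewrite sum_count_mem ?uniq_weak_compositions //.
by apply: eq_in_count => r /width_Rs size_r; rewrite inE mem_weak_compositions size_r.
Qed.

Definition row_partition Rs := sort geq [seq x <- map sumn Rs | 0 < x].

Lemma mult_row_partition Rs i :
  0 < i -> mult i (row_partition Rs) = count (fun r => sumn r == i) Rs.
Proof.
move=> i_gt0; rewrite /mult count_sort count_filter count_map.
by apply: eq_count => r /=; case: eqP => // ->; rewrite i_gt0.
Qed.

Lemma sumn_row_partition Rs : sumn (row_partition Rs) = sumn (map sumn Rs).
Proof. by rewrite (perm_sumn (permEl (perm_sort _ _))) sumn_filter_gt0. Qed.

Lemma row_partitionP Rs : is_partition (sumn (map sumn Rs)) (row_partition Rs).
Proof.
rewrite /is_partition sumn_row_partition eqxx andbT (sort_sorted geq_total).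
by rewrite all_sort filter_all.
Qed.

Definition row_counts Rs :=
  [seq [seq count_mem y Rs | y <- weak_compositions k i]
  | i <- iota 1 (sumn (map sumn Rs))].

Definition row_type Rs := (row_partition Rs, row_counts Rs).

Definition admissible_counts a :=
  [seq weak_compositions (size (weak_compositions k i)) (mult i a) | i <- iota 1 (sumn a)].

Definition row_types m :=
  [seq (a, cs) | a <- partitions_le m, cs <- cartesian (admissible_counts a)].

Lemma uniq_row_types m : uniq (row_types m).
Proof.
apply: allpairs_uniq_dep => [|a _|]; first exact: uniq_partitions_le.
  by apply/uniq_cartesian/allP => _ /mapP[i _ ->]; apply: uniq_weak_compositions.
by move=> [a cs] [a' cs'] _ _ /= [-> ->].
Qed.

Lemma mem_row_types m a cs : ((a, cs) \in row_types m) =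
  [&& sumn a <= m, is_partition (sumn a) a & cs \in cartesian (admissible_counts a)].
Proof.
apply/idP/idP => [/allpairsPdep[a' [cs' [+ + [-> ->]]]]|/and3P[a_m a_part cs_a]].
  by rewrite mem_partitions_le => /andP[-> ->].
by rewrite /row_types; apply/allpairsPdep; exists a, cs; rewrite mem_partitions_le a_m a_part.
Qed.

Lemma size_row_types m : size (row_types m) =
  (\sum_(0 <= j < m.+1) \sum_(a <- partitions j)
     \prod_(1 <= i < j.+1) 'C('C(i + k - 1, i) + mult i a - 1, mult i a))%N.
Proof.
rewrite size_allpairs_dep sumnE big_map big_allpairs_dep /=.
apply: eq_bigr => j _; apply: eq_big_seq => a.
rewrite mem_partitions => /and3P[_ _ /eqP sum_a].
rewrite size_cartesian big_map sum_a /index_iota subSS subn0.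
by apply: eq_bigr => i _; rewrite !size_weak_compositions [k + i]addnC [_ + mult i a]addnC.
Qed.

Lemma row_type_perm Rs Rs' : perm_eq Rs Rs' -> row_type Rs = row_type Rs'.
Proof.
move=> eq_Rs; rewrite /row_type /row_counts (perm_sumn (perm_map sumn eq_Rs)).
congr pair; last by apply/eq_map => i; apply/eq_map => y; apply/seq.permP.
apply/perm_sortP; [exact: geq_total|exact: geq_trans|exact: geq_anti|].
exact/perm_filter/perm_map.
Qed.

Lemma row_counts_admissible Rs :
  has_width Rs -> row_counts Rs \in cartesian (admissible_counts (row_partition Rs)).
Proof.
move=> width_Rs; rewrite mem_cartesian /admissible_counts sumn_row_partition all2_map_same.
apply/allP => i; rewrite mem_iota => /andP[i_gt0 _].
rewrite mem_weak_compositions size_map eqxx sumnE big_map -count_sumn_eq //.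
by rewrite mult_row_partition ?eqxx.
Qed.

Lemma row_type_mem Rs m :
  has_width Rs -> (row_type Rs \in row_types m) = (sumn (map sumn Rs) <= m).
Proof.
move=> width_Rs; rewrite mem_row_types sumn_row_partition row_partitionP.
by rewrite row_counts_admissible // !andbT.
Qed.

Lemma count_zero_row Rs :
  has_width Rs -> count_mem (nseq k 0) Rs = size Rs - size (row_partition Rs).
Proof.
move=> /allP width_Rs; rewrite size_sort size_filter count_map.
rewrite -(count_predC (fun r => 0 < sumn r) Rs) addKn.
apply: eq_in_count => r /width_Rs /eqP size_r /=.
by rewrite -eqn0Ngt sumn_eq0_nseq size_r eq_sym.
Qed.

Lemma count_mem_row_counts Rs y : size y = k -> 0 < sumn y <= sumn (map sumn Rs) ->
  count_mem y Rs =
  nth 0 (nth [::] (row_counts Rs) (sumn y).-1) (index y (weak_compositions k (sumn y))).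
Proof.
move=> size_y /andP[sum_y_gt0 le_y_Rs].
have y_comp : y \in weak_compositions k (sumn y) by rewrite mem_weak_compositions size_y !eqxx.
rewrite (nth_map 0) ?size_iota ?prednK // nth_iota ?prednK // add1n prednK //.
by rewrite (nth_map y) ?index_mem // nth_index.
Qed.

Lemma row_type_inj Rs Rs' : size Rs = size Rs' -> has_width Rs -> has_width Rs' ->
  row_type Rs = row_type Rs' -> perm_eq Rs Rs'.
Proof.
move=> eq_size width_Rs width_Rs' [eq_part eq_counts]; apply/allP => y _; apply/eqP.
have count_out S : has_width S -> ~~ ((size y == k) && (sumn y <= sumn (map sumn S))) ->
    count_mem y S = 0.
  move=> /allP width_S y_out; apply/count_memPn; apply: contra y_out => y_S.
  by rewrite (eqP (width_S _ y_S)) eqxx leq_sumn ?map_f.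
have eq_total : sumn (map sumn Rs) = sumn (map sumn Rs').
  by rewrite -!sumn_row_partition eq_part.
have [size_y|size_y] := eqVneq (size y) k; last by rewrite !count_out // negb_and size_y.
have [sum_y0|sum_y_gt0] := posnP (sumn y).
  have /eqP -> : y == nseq k 0 by rewrite -size_y -sumn_eq0_nseq sum_y0.
  by rewrite !count_zero_row // eq_size eq_part.
have [le_y|lt_y] := leqP (sumn y) (sumn (map sumn Rs)); last first.
  by rewrite !count_out // -?eq_total size_y eqxx -ltnNge.
by rewrite !count_mem_row_counts ?sum_y_gt0 -?eq_total ?eq_counts.
Qed.

Definition nonzero_rows j := [seq y | i <- iota 1 j, y <- weak_compositions k i].

Lemma mem_nonzero_rows j y :
  (y \in nonzero_rows j) = (size y == k) && (0 < sumn y <= j).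
Proof.
apply/idP/andP => [/allpairsPdep[i [y' [+ + ->]]]|[size_y sum_y]].
  by rewrite mem_iota add1n ltnS mem_weak_compositions => ? /andP[-> /eqP->].
apply/allpairsPdep; exists (sumn y), y; split => //.
  by rewrite mem_iota add1n ltnS.
by rewrite mem_weak_compositions size_y eqxx.
Qed.

Lemma uniq_nonzero_rows j : uniq (nonzero_rows j).
Proof.
apply: allpairs_uniq_dep => [|i _|]; rewrite ?iota_uniq ?uniq_weak_compositions //.
move=> _ _ /flatten_mapP[i _ /mapP[y + ->]] /flatten_mapP[i' _ /mapP[y' + ->]] /=.
by rewrite !mem_weak_compositions => /andP[_ /eqP<-] /andP[_ /eqP<-] ->.
Qed.

Section Witness.
Variables (a : seq nat) (cs : seq (seq nat)).
Hypotheses (a_part : is_partition (sumn a) a)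
  (cs_a : cs \in cartesian (admissible_counts a)).

Lemma admissible_nth i : 0 < i <= sumn a ->
  size (nth [::] cs i.-1) = size (weak_compositions k i) /\ sumn (nth [::] cs i.-1) = mult i a.
Proof.
move=> /andP[i_gt0 le_i]; have lt_i : i.-1 < sumn a by rewrite prednK.
move: cs_a; rewrite mem_cartesian => /(all2_nth [::] [::])[size_cs /(_ i.-1)].
rewrite size_cs size_map size_iota => /(_ lt_i).
rewrite (nth_map 0) ?size_iota // nth_iota // add1n prednK //.
by rewrite mem_weak_compositions => /andP[/eqP-> /eqP->].
Qed.

Lemma size_admissible : size cs = sumn a.
Proof.
by move: cs_a; rewrite mem_cartesian => /(all2_nth [::] [::])[-> _]; rewrite size_map size_iota.
Qed.

Definition type_count y :=
  nth 0 (nth [::] cs (sumn y).-1) (index y (weak_compositions k (sumn y))).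

Definition rows_of_type p :=
  flatten [seq nseq (type_count y) y | y <- nonzero_rows (sumn a)] ++ nseq p (nseq k 0).

Lemma has_width_rows_of_type p : has_width (rows_of_type p).
Proof.
apply/allP => r; rewrite mem_cat => /orP[/flatten_mapP[y + /nseqP[-> _]]|/nseqP[-> _]].
  by rewrite mem_nonzero_rows => /andP[].
by rewrite size_nseq.
Qed.

Lemma count_mem_rows_of_type p y : size y = k -> 0 < sumn y ->
  count_mem y (rows_of_type p) = (sumn y <= sumn a) * type_count y.
Proof.
move=> size_y sum_y_gt0; rewrite count_cat count_flatten_nseq ?uniq_nonzero_rows //.
rewrite mem_nonzero_rows size_y eqxx sum_y_gt0 count_nseq /=.
suff /negbTE-> : nseq k 0 != y by rewrite mul0n addn0.
by apply: contraTneq sum_y_gt0 => <-; rewrite sumn_nseq.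
Qed.

Lemma sum_type_count i : 0 < i <= sumn a ->
  \sum_(y <- weak_compositions k i) type_count y = mult i a.
Proof.
move=> /admissible_nth[size_cs <-].
rewrite -[in RHS](map_nth_index (uniq_weak_compositions k i) size_cs).
rewrite sumnE big_map; apply: eq_big_seq => y.
by rewrite mem_weak_compositions => /andP[_ /eqP sum_y]; rewrite /type_count sum_y.
Qed.

Lemma count_sumn_rows_of_type p i : 0 < i ->
  count (fun r => sumn r == i) (rows_of_type p) = mult i a.
Proof.
move=> i_gt0; rewrite count_sumn_eq ?has_width_rows_of_type //.
rewrite (eq_big_seq (fun y => (i <= sumn a) * type_count y)); last first.
  move=> y; rewrite mem_weak_compositions => /andP[/eqP size_y /eqP sum_y].
  by rewrite count_mem_rows_of_type // sum_y.
have [le_i|lt_i] := leqP i (sumn a).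
  by rewrite -sum_type_count ?i_gt0 //; apply: eq_bigr => y _; rewrite mul1n.
rewrite big1 => [|y _]; last by rewrite mul0n.
apply/esym/count_memPn; apply: contraTN lt_i => i_a.
by rewrite -leqNgt leq_sumn.
Qed.

Lemma size_rows_of_type p : size (rows_of_type p) = size a + p.
Proof.
rewrite size_cat size_nseq size_flatten_nseq big_allpairs_dep /=; congr (_ + _).
rewrite (eq_big_seq (fun i => mult i a)); last first.
  by move=> i; rewrite mem_iota add1n ltnS => le_i; rewrite sum_type_count.
have /and3P[_ pos_a _] := a_part.
rewrite sum_count_mem ?iota_uniq // -count_predT; apply: eq_in_count => x x_a.
by rewrite /= mem_iota add1n ltnS (allP pos_a) ?leq_sumn.
Qed.

Lemma row_type_rows_of_type p : row_type (rows_of_type p) = (a, cs).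
Proof.
have /and3P[sorted_a pos_a _] := a_part.
have part_W : row_partition (rows_of_type p) = a.
  have /and3P[sorted_W pos_W _] := row_partitionP (rows_of_type p).
  apply: eq_partition_mult => // i i_gt0.
  by rewrite mult_row_partition // count_sumn_rows_of_type.
have sum_W : sumn (map sumn (rows_of_type p)) = sumn a by rewrite -sumn_row_partition part_W.
rewrite /row_type part_W; congr pair.
apply: (@eq_from_nth _ [::]); rewrite size_map size_iota sum_W ?size_admissible // => i lt_i.
have [size_cs _] := admissible_nth (i := i.+1) lt_i.
rewrite (nth_map 0) ?size_iota sum_W // nth_iota // add1n.
rewrite -(map_nth_index (uniq_weak_compositions k i.+1) size_cs).
apply/eq_in_map => y; rewrite mem_weak_compositions => /andP[/eqP size_y /eqP sum_y].
by rewrite count_mem_rows_of_type ?sum_y // lt_i mul1n /type_count sum_y.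
Qed.

End Witness.

Lemma row_type_surj m d t : m <= d -> t \in row_types m ->
  exists Rs, [/\ size Rs = d, has_width Rs & row_type Rs = t].
Proof.
case: t => a cs le_md; rewrite mem_row_types => /and3P[le_am a_part cs_a].
exists (rows_of_type a cs (d - size a)).
rewrite size_rows_of_type // has_width_rows_of_type row_type_rows_of_type // subnKC //.
have /and3P[_ pos_a _] := a_part.
exact: leq_trans (size_le_sumn pos_a) (leq_trans le_am le_md).
Qed.

End RowTypes.

Section MonomialRows.
Variables d k : nat.
Implicit Types (m : 'X_{1..d * k}) (s : 'S_d).

Local Notation "m # s" := [multinom m (s i) | i < d * k]
  (at level 40, left associativity, format "m # s").

Definition mxvec_unindex (i : 'I_(d * k)) : 'I_d * 'I_k :=
  enum_val (cast_ord (esym (mxvec_cast d k)) i).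

Lemma mxvec_indexK r c : mxvec_unindex (mxvec_index r c) = (r, c).
Proof. by rewrite /mxvec_unindex /mxvec_index cast_ordK enum_rankK. Qed.

Lemma mxvec_unindexK i : mxvec_index (mxvec_unindex i).1 (mxvec_unindex i).2 = i.
Proof. by case/mxvec_indexP: i => r c; rewrite mxvec_indexK. Qed.

Definition mxvec_row_perm_fun (s : 'S_d) (i : 'I_(d * k)) :=
  mxvec_index (s (mxvec_unindex i).1) (mxvec_unindex i).2.

Lemma mxvec_row_perm_inj s : injective (mxvec_row_perm_fun s).
Proof.
move=> i i' /(congr1 mxvec_unindex); rewrite !mxvec_indexK => -[/perm_inj eq_r eq_c].
by rewrite -(mxvec_unindexK i) -(mxvec_unindexK i') eq_r eq_c.
Qed.

Definition mxvec_row_perm s : 'S_(d * k) := perm (@mxvec_row_perm_inj s).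

Lemma mxvec_row_permE s r c : mxvec_row_perm s (mxvec_index r c) = mxvec_index (s r) c.
Proof. by rewrite permE /mxvec_row_perm_fun mxvec_indexK. Qed.

Definition mrow m r : seq nat := [seq m (mxvec_index r c) | c <- enum 'I_k].

Definition mrows m : seq (seq nat) := [seq mrow m r | r <- enum 'I_d].

Lemma nth_mrow m r (c : 'I_k) : nth 0 (mrow m r) c = m (mxvec_index r c).
Proof. by rewrite /mrow (nth_map c) ?nth_ord_enum // size_enum_ord. Qed.

Lemma nth_mrows m (r : 'I_d) : nth [::] (mrows m) r = mrow m r.
Proof. by rewrite /mrows (nth_map r) ?nth_ord_enum // size_enum_ord. Qed.

Lemma size_mrows m : size (mrows m) = d.
Proof. by rewrite size_map size_enum_ord. Qed.

Lemma has_width_mrows m : has_width k (mrows m).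
Proof. by apply/allP => _ /mapP[r _ ->]; rewrite size_map size_enum_ord. Qed.

Lemma mdeg_mrows m : mdeg m = sumn (map sumn (mrows m)).
Proof.
rewrite mdegE (reindex _ (curry_mxvec_bij d k)) /=.
rewrite (eq_bigr (fun p => m (mxvec_index p.1 p.2))); last by case.
rewrite -(pair_bigA _ (fun r c => m (mxvec_index r c))) /=.
rewrite /mrows -map_comp sumnE big_map big_enum /=; apply: eq_bigr => r _.
by rewrite /mrow sumnE big_map big_enum.
Qed.

Lemma perm_mrows_act m s : perm_eq (mrows (m # mxvec_row_perm s)) (mrows m).
Proof.
have -> : mrows (m # mxvec_row_perm s) = [seq mrow m (s r) | r <- enum 'I_d].
  by apply/eq_map => r; apply/eq_map => c; rewrite mnmE mxvec_row_permE.
rewrite map_comp; apply: perm_map; apply: uniq_perm; rewrite ?enum_uniq //.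
  by rewrite map_inj_uniq ?enum_uniq //; apply: perm_inj.
by move=> r; rewrite mem_enum; apply/mapP; exists (s^-1 r)%g; rewrite ?mem_enum ?permKV.
Qed.

Lemma perm_mrows m m' : perm_eq (mrows m') (mrows m) -> exists s, m' = m # mxvec_row_perm s.
Proof.
have -> : mrows m = [tuple mrow m r | r < d].
  by apply: (@eq_from_nth _ [::]) => [|r]; rewrite size_mrows ?size_tuple.
move=> /tuple_permP[s eq_m']; exists s; apply/mnmP => i.
case/mxvec_indexP: i => r c; rewrite mnmE mxvec_row_permE -!nth_mrow.
by rewrite -nth_mrows eq_m' nth_mktuple tnth_mktuple.
Qed.

Lemma mrows_surj Rs : size Rs = d -> has_width k Rs -> exists m, mrows m = Rs.
Proof.
move=> size_Rs width_Rs.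
exists [multinom nth 0 (nth [::] Rs (mxvec_unindex i).1) (mxvec_unindex i).2 | i < d * k].
apply: (@eq_from_nth _ [::]) => [|r]; rewrite size_mrows ?size_Rs // => lt_rd.
have size_r : size (nth [::] Rs r) = k by apply/eqP/(allP width_Rs)/mem_nth; rewrite size_Rs.
rewrite /mrows (nth_map (Ordinal lt_rd)) ?size_enum_ord //.
apply: (@eq_from_nth _ 0) => [|c]; rewrite size_map size_enum_ord ?size_r // => lt_ck.
by rewrite -[c]/(nat_of_ord (Ordinal lt_ck)) nth_mrow mnmE mxvec_indexK nth_enum_ord.
Qed.

End MonomialRows.

Lemma eq_digits b n (f g : 'I_n -> nat) : (forall i, f i < b) -> (forall i, g i < b) ->
  \sum_(i < n) f i * b ^ i = \sum_(i < n) g i * b ^ i -> f =1 g.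
Proof.
elim: n f g => [|n IHn] f g f_b g_b eq_fg i; first by case: i.
have b_gt0 : 0 < b by apply: leq_ltn_trans (f_b ord0).
move: eq_fg; rewrite !big_ord_recl !expn0 !muln1.
have shift (h : 'I_n.+1 -> nat) : \sum_(i < n) h (lift ord0 i) * b ^ bump 0 i =
    (\sum_(i < n) h (lift ord0 i) * b ^ i) * b.
  by rewrite big_distrl; apply: eq_bigr => j _; rewrite /bump add1n expnS mulnCA mulnC.
rewrite !shift [f _ + _]addnC [g _ + _]addnC => eq_fg.
have eq0 : f ord0 = g ord0.
  by have := congr1 (modn ^~ b) eq_fg; rewrite !modnMDl !modn_small.
have eq_lift : \sum_(i < n) f (lift ord0 i) * b ^ i = \sum_(i < n) g (lift ord0 i) * b ^ i.
  by have := congr1 (divn ^~ b) eq_fg; rewrite !divnMDl // !divn_small // !addn0.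
case: (unliftP ord0 i) => [j ->|->] //.
exact: (IHn (fun j => f (lift ord0 j)) (fun j => g (lift ord0 j)) (fun j => f_b _)
  (fun j => g_b _) eq_lift j).
Qed.

Import GRing.Theory Num.Theory.
Local Open Scope ring_scope.

Section PolynomialIdentity.
Variable R : numDomainType.

Lemma poly_eq0_horner (q : {poly R}) : (forall t, q.[t] = 0) -> q = 0.
Proof.
move=> q0; apply: (@roots_geq_poly_eq0 _ q [seq i%:R | i <- iota 0 (size q)]).
- by apply/allP => _ /mapP[i _ ->]; apply/rootP.
- by rewrite map_inj_uniq ?iota_uniq // => i j /eqP; rewrite eqr_nat => /eqP.
- by rewrite size_map size_iota.
Qed.

(* Kronecker substitution x_i |-> t ^ (b ^ i), with b = msize p larger than every
   exponent, sends distinct monomials of p to distinct powers of t. *)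
Lemma mpoly_eq0_meval n (p : {mpoly R[n]}) : (forall v, p.@[v] = 0) -> p = 0.
Proof.
move=> p0; set b := msize p.
pose enc (m : 'X_{1..n}) := (\sum_(i < n) m i * b ^ i)%N.
pose q : {poly R} := \sum_(m <- msupp p) p@_m *: 'X^(enc m).
have q0 : q = 0.
  apply: poly_eq0_horner => t; rewrite -(p0 (fun i => t ^+ (b ^ i))) mevalE horner_sum.
  apply: eq_bigr => m _; rewrite hornerZ hornerXn -prodrXr; congr (_ * _).
  by apply: eq_bigr => i _; rewrite -exprM mulnC.
have enc_inj : {in msupp p &, injective enc}.
  have lt_b m i : m \in msupp p -> (m i < b)%N.
    move=> m_p; apply: leq_ltn_trans (msize_mdeg_lt m_p).
    by rewrite mdegE (bigD1 i) //= leq_addr.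
  by move=> m m' m_p m'_p /eq_digits eq_m; apply/mnmP/eq_m => i; apply: lt_b.
apply/mpolyP => m; rewrite mcoeff0.
have [m_p|/memN_msupp_eq0//] := boolP (m \in msupp p).
have := congr1 (fun q : {poly R} => q`_(enc m)) q0.
rewrite coef0 coef_sum (bigD1_seq m) ?msupp_uniq //= coefZ coefXn eqxx mulr1.
rewrite big1_seq ?addr0 // => m' /andP[ne_m' m'_p]; rewrite coefZ coefXn.
case: eqP => [/enc_inj eq_m|_]; last by rewrite mulr0.
by rewrite eq_m // eqxx in ne_m'.
Qed.

End PolynomialIdentity.

Lemma meval_msym (R : comNzRingType) n (s : 'S_n) (p : {mpoly R[n]}) v :
  (msym s p).@[v] = p.@[fun i => v (s i)].
Proof.
have -> : msym s p = \sum_(m <- msupp p) msym s (p@_m *: 'X_[m]).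
  by rewrite {1}(mpolyE p) raddf_sum.
rewrite [RHS]mevalE raddf_sum /=; apply: eq_bigr => m _.
rewrite msymZ msymX mevalZ mevalX; congr (_ * _).
rewrite (reindex_inj (@perm_inj _ s)) /=; apply: eq_bigr => i _.
by rewrite mnmE permK.
Qed.

Lemma evalM_perm (R : realType) d k (p : {mpoly R[d * k]}) (s : 'S_d) X :
  evalM p (perm_mx s *m X) = evalM (msym (mxvec_row_perm k s) p) X.
Proof.
rewrite /evalM meval_msym -row_permE; apply: meval_eq => i.
by case/mxvec_indexP: i => r c; rewrite mxvec_row_permE !mxvecE mxE.
Qed.

Lemma inv_poly_leE (R : realType) d k m (p : {mpoly R[d * k]}) :
  inv_poly_le m p <-> (msize p <= m.+1)%N /\ forall s, msym (mxvec_row_perm k s) p = p.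
Proof.
rewrite /inv_poly_le; split=> -[size_p inv_p]; split => // s; last first.
  by move=> X; rewrite evalM_perm inv_p.
apply/eqP; rewrite -subr_eq0; apply/eqP/mpoly_eq0_meval => v.
pose X : 'M[R]_(d, k) := vec_mx (\row_i v i).
have eq_v : (fun i => mxvec X 0 i) =1 v by move=> i; rewrite vec_mxK mxE.
by have := inv_p s X; rewrite evalM_perm /evalM !(meval_eq _ eq_v) mevalB => ->; rewrite subrr.
Qed.

Section OrbitSums.
Variables (R : nzRingType) (n b : nat) (G : Type) (act : G -> 'S_n).
Variables (K : eqType) (key : 'X_{1..n} -> K) (E : seq K).
Implicit Types (m : 'X_{1..n}) (p : {mpoly R[n]}).

Local Notation "m # s" := [multinom m (s i) | i < n]
  (at level 40, left associativity, format "m # s").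

Hypotheses (uniq_E : uniq E)
  (key_act : forall m g, key (m # act g) = key m)
  (key_orbit : forall m m', key m = key m' -> exists g, m' = m # act g)
  (mem_key : forall m, (key m \in E) = (mdeg m < b)%N)
  (key_onto : forall e, e \in E -> exists m, key m == e).

Definition invariant_le (p : {mpoly R[n]}) :=
  (msize p <= b)%N /\ forall g, msym (act g) p = p.

Definition orbit_sum (e : K) : {mpoly R[n]} :=
  \sum_(m : 'X_{1..n < b}) (key m == e)%:R *: 'X_[m].

Lemma mcoeff_orbit_sum e m : e \in E -> (orbit_sum e)@_m = (key m == e)%:R.
Proof.
move=> e_E; rewrite raddf_sum /=.
under eq_bigr do rewrite mcoeffZ mcoeffX.
have [lt_mb|le_bm] := ltnP (mdeg m) b.
  rewrite (bigD1 (BMultinom lt_mb)) //= eqxx mulr1 big1 ?addr0 // => m' ne_m'.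
  suff /negbTE-> : bmnm m' != m by rewrite mulr0.
  by apply: contra ne_m' => /eqP eq_m'; rewrite bmeqP /= eq_m'.
rewrite big1 => [|m' _]; last first.
  have /negbTE-> : bmnm m' != m by apply: contraTneq (bmdeg m') => ->; rewrite -leqNgt.
  by rewrite mulr0.
by case: eqP => // eq_m; rewrite leqNgt -mem_key eq_m e_E in le_bm.
Qed.

Lemma orbit_sum_invariant e : e \in E -> invariant_le (orbit_sum e).
Proof.
move=> e_E; split => [|g].
  rewrite msizeE; apply/bigmax_leqP_seq => m; rewrite mcoeff_msupp mcoeff_orbit_sum //.
  by case: (key m =P e) => [eq_key _ _|_]; rewrite ?eqxx // -mem_key eq_key.
by apply/mpolyP => m; rewrite mcoeff_sym !mcoeff_orbit_sum // key_act.
Qed.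

Local Notation E_ := (tnth (in_tuple E)).

Lemma mcoeff_orbit_comb (c : 'I_(size E) -> R) i m : key m = E_ i ->
  (\sum_j c j *: orbit_sum (E_ j))@_m = c i.
Proof.
move=> key_m; rewrite raddf_sum (bigD1 i) //= big1 ?addr0 => [|j ne_ji].
  by rewrite mcoeffZ mcoeff_orbit_sum ?mem_tnth // key_m eqxx mulr1.
rewrite mcoeffZ mcoeff_orbit_sum ?mem_tnth // key_m.
by rewrite (inj_eq (@tuple_uniqP _ _ (in_tuple E) uniq_E)) eq_sym (negbTE ne_ji) mulr0.
Qed.

Lemma mcoeff_orbit_comb_out (c : 'I_(size E) -> R) m : key m \notin E ->
  (\sum_j c j *: orbit_sum (E_ j))@_m = 0.
Proof.
move=> key_m; rewrite raddf_sum big1 // => j _ /=.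
rewrite mcoeffZ mcoeff_orbit_sum ?mem_tnth //.
case: (key m =P E_ j) => [eq_key|_]; last by rewrite mulr0.
by rewrite eq_key mem_tnth in key_m.
Qed.

Lemma has_dim_orbit_sums : has_dim invariant_le (size E).
Proof.
have rep i : {m | key m = E_ i}.
  by have /key_onto/sigW[m /eqP] := mem_tnth i (in_tuple E); exists m.
exists (fun i => orbit_sum (E_ i)); split.
- by move=> i; apply/orbit_sum_invariant/mem_tnth.
- move=> c sum0 i; have /(congr1 (mcoeff (sval (rep i)))) := sum0.
  by rewrite mcoeff0 (mcoeff_orbit_comb _ (svalP (rep i))).
move=> p [size_p inv_p]; exists (fun i => p@_(sval (rep i))); apply/mpolyP => m.
have [/(tnthP (in_tuple E))[i key_m]|key_m] := boolP (key m \in E).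
  rewrite (mcoeff_orbit_comb _ key_m).
  have [g ->] := key_orbit (etrans (svalP (rep i)) (esym key_m)).
  by rewrite -mcoeff_sym inv_p.
rewrite mcoeff_orbit_comb_out //; apply/memN_msupp_eq0/msize_mdeg_ge.
by apply: leq_trans size_p _; rewrite leqNgt -mem_key.
Qed.

End OrbitSums.

Lemma has_dim_eq (R : pzRingType) (V : lmodType R) (S S' : V -> Prop) N :
  (forall v, S v <-> S' v) -> has_dim S N -> has_dim S' N.
Proof.
move=> eq_S [B [B_S free_B span_B]]; exists B; split => // [i|v /eq_S]; first exact/eq_S.
exact: span_B.
Qed.

Theorem mainTheorem6 (R : realType) (d k m : nat) :
  (m <= d)%N ->
  has_dim (@inv_poly_le R d k m)
    (\sum_(0 <= j < m.+1) \sum_(a <- partitions j)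
        \prod_(1 <= i < j.+1)
          'C('C(i + k - 1, i) + mult i a - 1, mult i a))%N.
Proof.
move=> le_md; rewrite -size_row_types.
apply: has_dim_eq (fun p => iff_sym (inv_poly_leE m p)) _.
apply: (@has_dim_orbit_sums _ _ _ _ _ _ (fun mo => row_type k (mrows mo))).
- exact: uniq_row_types.
- by move=> mo s; apply/row_type_perm/perm_mrows_act.
- move=> mo mo' /row_type_inj eq_mo; apply: perm_mrows; rewrite perm_sym.
  by apply: eq_mo; rewrite ?size_mrows ?has_width_mrows.
- by move=> mo; rewrite row_type_mem ?has_width_mrows // -mdeg_mrows ltnS.
- move=> t /(row_type_surj le_md)[Rs [size_Rs width_Rs <-]].
  by have [mo <-] := mrows_surj size_Rs width_Rs; exists mo.
Qed.
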